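(* Fix $n\geq 5$ and let $r>0$. Consider the $n\times n$ symmetric matrices $P=[p_{ij}]$ with $p_{ii}=x_i\geq 0$ ($1\le i\le n$), $p_{i,i+2}=p_{i+2,i}=y_i\geq 0$ ($1\le i\le n-2$), and all other entries (in particular $p_{i,i+1}=p_{i+1,i}$) equal to $0$. Then $P^{\circ r}$ is positive definite for every positive definite such $P$ if and only if $r\geq 1$; likewise, $P^{\circ r}$ is positive semidefinite for every positive semidefinite such $P$ if and only if $r\geq 1$.
   Context: For a nonnegative matrix $A=[a_{ij}]$ and $r>0$, the Hadamard power is $A^{\circ r}=[a_{ij}^r]$. Positive (semi)definite matrices are required to be symmetric. *)

From HB Require Import structures.
From mathcomp Require Import all_boot all_order all_algebra.
From mathcomp Require Import reals exp.
Set Implicit Arguments. Unset Strict Implicit. Unset Printing Implicit Defensive.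
Import Order.TTheory GRing.Theory Num.Theory.
Local Open Scope ring_scope.

Definition hpow (R : realType) (n : nat) (r : R) (A : 'M[R]_n) : 'M[R]_n :=
  \matrix_(i, j) (A i j `^ r).

Definition posdef (R : realType) (n : nat) (A : 'M[R]_n) : Prop :=
  A^T = A /\ forall x : 'rV[R]_n, x != 0 -> 0 < (x *m A *m x^T) 0 0.

Definition possemidef (R : realType) (n : nat) (A : 'M[R]_n) : Prop :=
  A^T = A /\ forall x : 'rV[R]_n, 0 <= (x *m A *m x^T) 0 0.

Definition dist2_pattern (R : realType) (n : nat) (P : 'M[R]_n) : Prop :=
  P^T = P /\
  (forall i j, 0 <= P i j) /\
  (forall i j : 'I_n, i != j -> (i : nat) != (j + 2)%N -> (j : nat) != (i + 2)%N ->
     P i j = 0).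

From HB Require Import structures.
From mathcomp Require Import all_boot all_order all_algebra.
From mathcomp Require Import reals exp.
From mathcomp Require Import ring lra zify.
Set Implicit Arguments. Unset Strict Implicit. Unset Printing Implicit Defensive.
Import Order.TTheory GRing.Theory Num.Theory.
Local Open Scope ring_scope.

(* A matrix with the pattern of the theorem, diagonal x and entries y_i at (i, i+2), is the
   Gram matrix of q(v) = sum_i x_i v_i^2 + 2 sum_i y_i v_i v_(i+2).  Completing the square in
   the last coordinate m gives q = q' + x_m (v_m + y_(m-2) v_(m-2) / x_m)^2, where q' has the
   same shape with x_(m-2) lowered to the Schur complement x_(m-2) - y_(m-2)^2 / x_m.  For
   r >= 1, superadditivity of t |-> t^r makes x_(m-2)^r exceed the r-th power of that Schur
   complement by at least (y_(m-2)^2 / x_m)^r, and the 2x2 block with entries (y^2/x)^r, y^r,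
   x^r is singular and positive semidefinite; so the Hadamard power of q dominates that of q'
   plus a square, and induction on the size preserves (semi)definiteness.  For r < 1, the
   block [[1,t,0],[t,2,t],[0,t,1]] on the coordinates 0, 2, 4 (identity elsewhere) is positive
   definite for 0 <= t < 1, but its r-th power at (1, -1, 1) is 2 + 2^r - 4 t^r, negative once
   t is close enough to 1. *)

Lemma ge1r_powRD (R : realType) (r a b : R) : 1 <= r -> 0 <= a -> 0 <= b ->
  a `^ r + b `^ r <= (a + b) `^ r.
Proof.
move=> r1 a0 b0; have r0 : 0 < r by apply: lt_le_trans r1.
have ab0 : 0 <= a + b by apply: addr_ge0.
rewrite -(mulr_powRB1 a0 r0) -(mulr_powRB1 b0 r0) -(mulr_powRB1 ab0 r0) mulrDl.
have r10 : 0 <= r - 1 by rewrite subr_ge0.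
by apply: lerD; apply: ler_wpM2l => //; apply: ge0_ler_powR; rewrite ?nnegrE ?lerDl ?lerDr.
Qed.

Lemma ltr1_powR (R : realType) (a r : R) : 1 < a -> r < 1 -> a `^ r < a.
Proof.
move=> a1 r1; have a0 : 0 < a by apply: lt_trans a1.
rewrite -ltr_ln ?posrE ?powR_gt0 // ln_powR.
have := ln_gt0 a1; nra.
Qed.

Section Dist2Form.
Variable R : comPzRingType.
Implicit Types (x y v w : nat -> R).

Definition dist2_link y v (m : nat) : R := if m is k.+2 then y k * v k else 0.

Fixpoint dist2_form x y v (n : nat) : R :=
  if n is m.+1 then dist2_form x y v m + x m * v m ^+ 2 + 2 * v m * dist2_link y v m
  else 0.

Lemma dist2_formS x y v m : dist2_form x y v m.+1 =
  dist2_form x y v m + x m * v m ^+ 2 + 2 * v m * dist2_link y v m.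
Proof. by []. Qed.

Lemma prefix0_or_nz v n :
  (forall i, (i < n)%N -> v i = 0) \/ exists2 i, (i < n)%N & v i != 0.
Proof.
have [/existsP [i vi]|/existsPn v0] := boolP [exists i : 'I_n, v i != 0].
  by right; exists i.
by left=> i lt_in; apply/eqP; have := v0 (Ordinal lt_in); rewrite negbK.
Qed.

Lemma dist2_link_ext y v w m : (forall i, (i < m)%N -> v i = w i) ->
  dist2_link y v m = dist2_link y w m.
Proof. by case: m => [|[|k]] //= vw; rewrite vw. Qed.

Lemma dist2_link_prefix0 y v m : (forall i, (i < m)%N -> v i = 0) ->
  dist2_link y v m = 0.
Proof. by case: m => [|[|k]] //= v0; rewrite v0 ?mulr0. Qed.

Lemma dist2_form_ext x x' y v w n :
  (forall i, (i < n)%N -> x i = x' i) -> (forall i, (i < n)%N -> v i = w i) ->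
  dist2_form x y v n = dist2_form x' y w n.
Proof.
elim: n => [//|m IH] xx' vw /=.
have xx'_m i : (i < m)%N -> x i = x' i by move/ltnW/xx'.
have vw_m i : (i < m)%N -> v i = w i by move/ltnW/vw.
rewrite (IH xx'_m vw_m) xx' // vw //; congr (_ + _ * _).
exact: dist2_link_ext.
Qed.

Lemma dist2_form0 x y v n : (forall i, (i < n)%N -> v i = 0) -> dist2_form x y v n = 0.
Proof.
elim: n => [//|m IH] v0 /=.
by rewrite IH => [|i /ltnW/v0 //]; rewrite v0 //; ring.
Qed.

Lemma dist2_form_tail0 x y v p n : (p <= n)%N ->
  (forall i, (p <= i < n)%N -> v i = 0) -> dist2_form x y v n = dist2_form x y v p.
Proof.
elim: n => [|n IH] le_pn v0; first by move: le_pn; rewrite leqn0 => /eqP ->.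
have [->//|ne_pn] := eqVneq p n.+1.
have le_pn' : (p <= n)%N by lia.
rewrite /= IH // => [|i /andP [le_pi lt_in]]; last by apply: v0; lia.
have -> : v n = 0 by apply: v0; lia.
ring.
Qed.

Lemma dist2_form_unit x y n k : (k < n)%N ->
  dist2_form x y (fun i => (i == k)%:R) n = x k.
Proof.
elim: n => [//|m IH] lt_kn /=.
have [lt_km|le_mk] := ltnP k m.
  by rewrite IH // gtn_eqF //=; ring.
have -> : k = m by lia.
rewrite dist2_form0 => [|i /ltn_eqF -> //]; rewrite eqxx.
case: m {IH lt_kn le_mk} => [|[|j]] /=; try ring.
by rewrite (_ : (j == j.+2) = false) /=; [ring | lia].
Qed.

Lemma dist2_form_shift_diag x x' y v n k : (k < n)%N ->
  (forall i, i != k -> x' i = x i) ->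
  dist2_form x' y v n = dist2_form x y v n + (x' k - x k) * v k ^+ 2.
Proof.
move=> lt_kn xx'; elim: n lt_kn => [//|m IH] lt_kn /=.
have [lt_km|le_mk] := ltnP k m.
  by rewrite IH // (xx' m) ?gtn_eqF //; ring.
have ekm : k = m by lia.
subst k; have x'x i : (i < m)%N -> x' i = x i by move/ltn_eqF/negbT; exact: xx'.
by rewrite (dist2_form_ext y (x := x') (w := v) x'x) //; ring.
Qed.

End Dist2Form.

Section Dist2Schur.
Variable R : fieldType.
Implicit Types (x y v : nat -> R).

Definition dist2_schur x y (m i : nat) : R := x i - (i.+2 == m)%:R * (y i ^+ 2 / x m).

Lemma dist2_schur_small x y m i : (m < 2)%N -> dist2_schur x y m i = x i.
Proof. by move=> lt_m2; rewrite /dist2_schur gtn_eqF ?mul0r ?subr0 //; lia. Qed.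

Lemma dist2_formS_schur x y v m : x m != 0 ->
  dist2_form x y v m.+1 =
  dist2_form (dist2_schur x y m) y v m + x m * (v m + dist2_link y v m / x m) ^+ 2.
Proof.
move=> xm0; case: m xm0 => [|[|k]] xm0.
- by rewrite /=; field.
- by rewrite /= dist2_schur_small //; field.
rewrite dist2_formS.
rewrite (dist2_form_shift_diag y v (x := x) (x' := dist2_schur x y k.+2) (k := k)) //.
  by rewrite /dist2_schur eqxx /=; field.
by move=> i ne_ik; rewrite /dist2_schur !eqSS (negbTE ne_ik) mul0r subr0.
Qed.

Lemma dist2_form_schur_min x y v m : x m != 0 ->
  dist2_form x y (fun i => if i == m then - (dist2_link y v m / x m) else v i) m.+1 =
  dist2_form (dist2_schur x y m) y v m.
Proof.
move=> xm0; set w := fun i => _.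
have vw i : (i < m)%N -> w i = v i by move=> /ltn_eqF; rewrite /w => ->.
rewrite dist2_formS_schur // (dist2_link_ext y vw).
rewrite (dist2_form_ext y (x' := dist2_schur x y m) _ vw) //.
by rewrite /w eqxx addNr expr0n mulr0 addr0.
Qed.

End Dist2Schur.

Section Dist2Definite.
Variable R : realFieldType.
Implicit Types (x y v : nat -> R).

Definition dist2_psd n x y := forall v, 0 <= dist2_form x y v n.

Definition dist2_pd n x y :=
  forall v, (exists2 i, (i < n)%N & v i != 0) -> 0 < dist2_form x y v n.

Lemma dist2_pd_psd n x y : dist2_pd n x y -> dist2_psd n x y.
Proof.
move=> hpd v; have [v0|nz] := prefix0_or_nz v n.
  by rewrite dist2_form0.
exact/ltW/hpd.
Qed.

Lemma dist2_psd_diag n x y k : dist2_psd n x y -> (k < n)%N -> 0 <= x k.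
Proof. by move=> hpsd lt_kn; rewrite -(dist2_form_unit x y lt_kn). Qed.

Lemma dist2_pd_diag n x y k : dist2_pd n x y -> (k < n)%N -> 0 < x k.
Proof.
move=> hpd lt_kn; rewrite -(dist2_form_unit x y lt_kn); apply: hpd.
by exists k; rewrite ?eqxx ?oner_eq0.
Qed.

Lemma dist2_psd_prefix m x y : dist2_psd m.+1 x y -> dist2_psd m x y.
Proof.
move=> hpsd v; have := hpsd (fun i => if i == m then 0 else v i).
rewrite dist2_formS eqxx expr2 !(mulr0, mul0r, addr0).
by rewrite (dist2_form_ext y (x' := x) (w := v)) // => i /ltn_eqF ->.
Qed.

Lemma dist2_psd_offdiag0 k x y : dist2_psd k.+3 x y -> x k.+2 = 0 -> y k = 0.
Proof.
move=> hpsd xk0; have [//|yk0] := eqVneq (y k) 0; exfalso.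
pose t := - (x k + 1) / (2 * y k).
pose v i := (i == k)%:R + t * (i == k.+2)%:R.
have vk : v k = 1 by rewrite /v eqxx (_ : (k == k.+2) = false) ?mulr0 ?addr0 //; lia.
have vk2 : v k.+2 = t by rewrite /v eqxx (_ : (k.+2 == k) = false) ?mulr1 ?add0r //; lia.
have ve i : (i < k.+2)%N -> v i = (i == k)%:R.
  by move=> lt_i; rewrite /v (_ : (i == k.+2) = false) ?mulr0 ?addr0 //; lia.
have link : dist2_link y v k.+2 = y k by rewrite /= vk mulr1.
have tyk : 2 * t * y k = - (x k + 1) by rewrite /t; field.
have := hpsd v; rewrite dist2_formS link xk0 vk2 (dist2_form_ext y (x' := x) _ ve) //.
rewrite dist2_form_unit //; lra.
Qed.

Lemma dist2_psd_schur m x y : x m != 0 -> dist2_psd m.+1 x y ->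
  dist2_psd m (dist2_schur x y m) y.
Proof. by move=> xm0 hpsd v; rewrite -dist2_form_schur_min. Qed.

Lemma dist2_pd_schur m x y : x m != 0 -> dist2_pd m.+1 x y ->
  dist2_pd m (dist2_schur x y m) y.
Proof.
move=> xm0 hpd v [i lt_im vi]; rewrite -dist2_form_schur_min //.
by apply: hpd; exists i; [exact: ltnW | rewrite ltn_eqF].
Qed.

Lemma dist2_schur_ge0 m x y : (forall i, 0 <= x i) ->
  dist2_psd m (dist2_schur x y m) y -> forall i, 0 <= dist2_schur x y m i.
Proof.
move=> x0 hpsd i; have [e_im|ne_im] := eqVneq i.+2 m.
  by apply: dist2_psd_diag hpsd _; rewrite -e_im.
by rewrite /dist2_schur (negbTE ne_im) mul0r subr0.
Qed.

Lemma dist2_pd_extend m x y (c : R) (Q : (nat -> R) -> R) : 0 < c ->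
  dist2_pd m x y ->
  (forall v, dist2_form x y v m + c * (v m + dist2_link y v m / c) ^+ 2 <= Q v) ->
  forall v, (exists2 i, (i < m.+1)%N & v i != 0) -> 0 < Q v.
Proof.
move=> c0 hpd hQ v [i lt_i vi]; apply: lt_le_trans (hQ v).
have [v0|nz] := prefix0_or_nz v m; last first.
  apply: lt_le_trans (hpd v nz) _; rewrite lerDl.
  by apply: mulr_ge0; [exact: ltW | exact: sqr_ge0].
have vm : v m != 0.
  have [/v0 vi0|le_mi] := ltnP i m; first by rewrite vi0 eqxx in vi.
  by have <- : i = m by lia.
rewrite dist2_form0 // dist2_link_prefix0 // mul0r addr0 add0r.
by apply: mulr_gt0 => //; rewrite exprn_even_gt0 ?vm ?orbT.
Qed.

End Dist2Definite.

Section Dist2PowR.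
Variable R : realType.
Implicit Types (x y v : nat -> R).

Lemma dist2_formS_powR_schur r x y v m : 1 <= r -> (forall i, 0 <= y i) ->
  0 < x m -> (forall i, 0 <= dist2_schur x y m i) ->
  dist2_form (fun i => dist2_schur x y m i `^ r) (fun i => y i `^ r) v m
    + x m `^ r * (v m + dist2_link (fun i => y i `^ r) v m / x m `^ r) ^+ 2
  <= dist2_form (fun i => x i `^ r) (fun i => y i `^ r) v m.+1.
Proof.
move=> r1 y0 xm0 s0; rewrite dist2_formS.
have [lt_m2|le2m] := ltnP m 2.
  have -> : dist2_link (fun i => y i `^ r) v m = 0 by case: m lt_m2 {xm0 s0} => [|[|]].
  rewrite (dist2_form_ext _ (x' := fun i => x i `^ r) (w := v)) // => [|i _].
    by rewrite mul0r mulr0 !addr0.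
  by rewrite dist2_schur_small.
case: m le2m xm0 s0 => [|[|k]] // _ xm0 s0.
set B := y k `^ r; set C := x k.+2 `^ r; set d := y k ^+ 2 / x k.+2.
have C0 : 0 < C by apply: powR_gt0.
have d0 : 0 <= d by apply: divr_ge0; [exact: sqr_ge0 | exact: ltW].
(* the 2x2 block [[d^r, B], [B, C]] is singular *)
have BB : B * B = d `^ r * C.
  by rewrite -!powRM ?(ltW xm0) // /d mulfVK ?gt_eqF // expr2.
have sup : dist2_schur x y k.+2 k `^ r + d `^ r <= x k `^ r.
  have -> : x k = dist2_schur x y k.+2 k + d by rewrite /dist2_schur eqxx /= /d; ring.
  exact: ge1r_powRD.
have -> : dist2_link (fun i => y i `^ r) v k.+2 = B * v k by [].
have -> : C * (v k.+2 + B * v k / C) ^+ 2 =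
    C * v k.+2 ^+ 2 + 2 * v k.+2 * (B * v k) + B * B / C * v k ^+ 2.
  by field; rewrite gt_eqF.
rewrite BB mulfK ?gt_eqF //.
rewrite (dist2_form_shift_diag _ v (x := fun i => x i `^ r) (k := k)) //; last first.
  by move=> i ne_ik; rewrite /dist2_schur !eqSS (negbTE ne_ik) mul0r subr0.
have : 0 <= (x k `^ r - dist2_schur x y k.+2 k `^ r - d `^ r) * v k ^+ 2.
  by apply: mulr_ge0; [lra | exact: sqr_ge0].
lra.
Qed.

Lemma dist2_psd_powR r n x y : 1 <= r -> (forall i, 0 <= x i) -> (forall i, 0 <= y i) ->
  dist2_psd n x y -> dist2_psd n (fun i => x i `^ r) (fun i => y i `^ r).
Proof.
move=> r1 + y0; have r0 : r != 0 by rewrite gt_eqF // (lt_le_trans ltr01).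
elim: n x => [//|m IH] x x0 hpsd v.
have [xm0|xm_neq0] := eqVneq (x m) 0; last first.
  have hs := dist2_psd_schur xm_neq0 hpsd; have s0 := dist2_schur_ge0 x0 hs.
  have xm_gt0 : 0 < x m by rewrite lt_neqAle eq_sym xm_neq0 x0.
  apply: le_trans (dist2_formS_powR_schur v r1 y0 xm_gt0 s0).
  apply: addr_ge0; first exact: IH s0 hs v.
  by apply: mulr_ge0; [exact: powR_ge0 | exact: sqr_ge0].
rewrite dist2_formS.
have -> : dist2_link (fun i => y i `^ r) v m = 0.
  case: m {IH} hpsd xm0 => [|[|k]] //= hpsd xm0.
  by rewrite (dist2_psd_offdiag0 hpsd xm0) powR0 // mul0r.
rewrite xm0 powR0 // mul0r mulr0 !addr0.
exact: IH x0 (dist2_psd_prefix hpsd) v.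
Qed.

Lemma dist2_pd_powR r n x y : 1 <= r -> (forall i, 0 <= x i) -> (forall i, 0 <= y i) ->
  dist2_pd n x y -> dist2_pd n (fun i => x i `^ r) (fun i => y i `^ r).
Proof.
move=> r1 + y0; elim: n x => [x _ _ v [] //|m IH] x x0 hpd.
have xm0 : 0 < x m by apply: dist2_pd_diag hpd _.
have hs := dist2_pd_schur (lt0r_neq0 xm0) hpd.
have s0 := dist2_schur_ge0 x0 (dist2_pd_psd hs).
apply: (dist2_pd_extend (c := x m `^ r) (powR_gt0 _ xm0) (IH _ s0 hs)) => v.
exact: dist2_formS_powR_schur.
Qed.

End Dist2PowR.

Section Dist2Matrix.
Variable R : comPzRingType.
Implicit Types (x y w : nat -> R).

Definition dist2_entry x y (i j : nat) : R :=
  if i == j then x i else if i.+2 == j then y i else if j.+2 == i then y j else 0.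

Definition dist2_mx n x y : 'M[R]_n := \matrix_(i, j) dist2_entry x y i j.

Lemma dist2_entry_diag x y i : dist2_entry x y i i = x i.
Proof. by rewrite /dist2_entry eqxx. Qed.

Lemma dist2_entry_up x y i : dist2_entry x y i i.+2 = y i.
Proof. by rewrite /dist2_entry (_ : (i == i.+2) = false) ?eqxx //; lia. Qed.

Lemma dist2_entry_far x y i j : i != j -> i.+2 != j -> j.+2 != i ->
  dist2_entry x y i j = 0.
Proof. by rewrite /dist2_entry => /negbTE-> /negbTE-> /negbTE->. Qed.

Lemma dist2_entry_sym x y i j : dist2_entry x y i j = dist2_entry x y j i.
Proof.
rewrite /dist2_entry eq_sym; case: eqVneq => [->//|_].
by case: (eqVneq i.+2 j) => [<-|//]; rewrite (_ : (i.+4 == i) = false) //; lia.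
Qed.

Lemma eq_dist2_mx n x x' y y' : x =1 x' -> y =1 y' ->
  dist2_mx n x y = dist2_mx n x' y'.
Proof. by move=> ex ey; apply/matrixP => i j; rewrite !mxE /dist2_entry !ex !ey. Qed.

Lemma dist2_mx_sym n x y : (dist2_mx n x y)^T = dist2_mx n x y.
Proof. by apply/matrixP => i j; rewrite !mxE dist2_entry_sym. Qed.

Lemma dist2_entry_col_sum x y w p :
  \sum_(0 <= i < p) w i * dist2_entry x y i p = dist2_link y w p.
Proof.
case: p => [|[|k]]; first by rewrite big_geq.
  by rewrite big_nat1 dist2_entry_far ?mulr0.
rewrite !big_nat_recr //= dist2_entry_up (dist2_entry_far _ _ (i := k.+1)) ?mulr0 ?addr0;
  try lia.
rewrite big_nat big1 => [|i /andP [_ lt_ik]]; first by rewrite add0r mulrC.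
by rewrite dist2_entry_far ?mulr0 //; lia.
Qed.

Lemma dist2_form_sum x y w p :
  \sum_(0 <= i < p) \sum_(0 <= j < p) w i * dist2_entry x y i j * w j =
  dist2_form x y w p.
Proof.
elim: p => [|p IH]; first by rewrite big_geq.
rewrite big_nat_recr //=; under eq_bigr => i _ do rewrite big_nat_recr //=.
rewrite big_split /= IH big_nat_recr //=.
have col : \sum_(0 <= i < p) w i * dist2_entry x y i p * w p = dist2_link y w p * w p.
  by rewrite -mulr_suml dist2_entry_col_sum.
have row : \sum_(0 <= j < p) w p * dist2_entry x y p j * w j = w p * dist2_link y w p.
  rewrite -(dist2_entry_col_sum x) mulr_sumr; apply: eq_bigr => j _.
  by rewrite dist2_entry_sym; ring.
by rewrite col row dist2_entry_diag; ring.
Qed.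

Lemma dist2_mx_form n x y (u : 'rV[R]_n.+1) :
  (u *m dist2_mx n.+1 x y *m u^T) 0 0 = dist2_form x y (fun i => u 0 (inord i)) n.+1.
Proof.
rewrite -dist2_form_sum mxE big_mkord.
under [RHS]eq_bigr => i _ do rewrite big_mkord.
rewrite [RHS]exchange_big /=; apply: eq_bigr => j _.
rewrite !mxE mulr_suml; apply: eq_bigr => i _.
by rewrite !mxE !inord_val.
Qed.

Lemma dist2_mx_form_row n x y w :
  ((\row_(j < n.+1) w j) *m dist2_mx n.+1 x y *m (\row_(j < n.+1) w j)^T) 0 0 =
  dist2_form x y w n.+1.
Proof.
by rewrite dist2_mx_form; apply: dist2_form_ext => // i lt_i; rewrite mxE inordK.
Qed.

End Dist2Matrix.

Section Dist2MatrixDefinite.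
Variable R : realType.
Implicit Types (x y : nat -> R).

Lemma posdef_possemidef n (A : 'M[R]_n) : posdef A -> possemidef A.
Proof.
move=> [symA posA]; split=> // u.
by have [->|/posA/ltW//] := eqVneq u 0; rewrite !mul0mx mxE.
Qed.

Lemma posdef_dist2_mxP n x y : posdef (dist2_mx n.+1 x y) <-> dist2_pd n.+1 x y.
Proof.
split=> [[_ posA] v [i lt_i vi] | hpd].
  rewrite -dist2_mx_form_row; apply: posA; apply/eqP => v0; move: vi.
  have := congr1 (fun M : 'rV_n.+1 => M 0 (Ordinal lt_i)) v0.
  by rewrite !mxE => ->; rewrite eqxx.
split=> [|u u0]; first exact: dist2_mx_sym.
rewrite dist2_mx_form; apply: hpd.
have [v0|//] := prefix0_or_nz (fun i => u 0 (inord i)) n.+1.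
case/eqP: u0; apply/rowP => j; rewrite mxE -[j]inord_val.
exact: v0 (ltn_ord j).
Qed.

Lemma possemidef_dist2_mxP n x y : possemidef (dist2_mx n.+1 x y) <-> dist2_psd n.+1 x y.
Proof.
split=> [[_ posA] v | hpsd]; first by rewrite -dist2_mx_form_row.
by split=> [|u]; [exact: dist2_mx_sym | rewrite dist2_mx_form].
Qed.

Lemma dist2_mx_pattern n x y : (forall i, 0 <= x i) -> (forall i, 0 <= y i) ->
  dist2_pattern (dist2_mx n x y).
Proof.
move=> x0 y0; split; first exact: dist2_mx_sym.
split=> [i j | i j ne_ij ne_i_j2 ne_j_i2]; rewrite mxE.
  by rewrite /dist2_entry; do 3 case: ifP => _ //.
by rewrite dist2_entry_far // -addn2 eq_sym.
Qed.

Lemma dist2_patternE n (A : 'M[R]_n.+1) : dist2_pattern A ->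
  A = dist2_mx n.+1 (fun i => A (inord i) (inord i)) (fun i => A (inord i) (inord i.+2)).
Proof.
move=> [symA [_ farA]]; apply/matrixP => i j; rewrite mxE /dist2_entry.
have ordE (k : 'I_n.+1) (m : nat) : m = k -> k = inord m by move=> ->; rewrite inord_val.
case: eqVneq => [/val_inj <-|ne_ij]; first by rewrite inord_val.
case: eqVneq => [/ordE <-|ne_i2j]; first by rewrite inord_val.
case: eqVneq => [/ordE <-|ne_j2i]; first by rewrite -[in LHS]symA mxE inord_val.
by rewrite farA // addn2 eq_sym.
Qed.

Lemma hpow_dist2_mx n r x y : r != 0 ->
  hpow r (dist2_mx n x y) = dist2_mx n (fun i => x i `^ r) (fun i => y i `^ r).
Proof.
move=> r0; apply/matrixP => i j; rewrite !mxE /dist2_entry.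
by do 3 case: ifP => _ //; rewrite powR0.
Qed.

Lemma posdef_hpow n r (P : 'M[R]_n.+1) : 1 <= r -> dist2_pattern P ->
  posdef P -> posdef (hpow r P).
Proof.
move=> r1 hP; have [_ [P0 _]] := hP.
have r0 : r != 0 by rewrite gt_eqF // (lt_le_trans ltr01).
rewrite (dist2_patternE hP) hpow_dist2_mx // !posdef_dist2_mxP.
by apply: dist2_pd_powR => // i; exact: P0.
Qed.

Lemma possemidef_hpow n r (P : 'M[R]_n.+1) : 1 <= r -> dist2_pattern P ->
  possemidef P -> possemidef (hpow r P).
Proof.
move=> r1 hP; have [_ [P0 _]] := hP.
have r0 : r != 0 by rewrite gt_eqF // (lt_le_trans ltr01).
rewrite (dist2_patternE hP) hpow_dist2_mx // !possemidef_dist2_mxP.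
by apply: dist2_psd_powR => // i; exact: P0.
Qed.

End Dist2MatrixDefinite.

Section Counterexample.
Variable R : realType.

Definition cex_diag (a : R) (i : nat) : R := if i == 2 then a else 1.
Definition cex_off (b : R) (i : nat) : R := if (i == 0) || (i == 2) then b else 0.
Definition cex_vec (i : nat) : R :=
  if i == 0 then 1 else if i == 2 then -1 else if i == 4 then 1 else 0.

Lemma cex_pd5 t : 0 <= t < 1 -> dist2_pd 5 (cex_diag 2) (cex_off t).
Proof.
move=> /andP [t0 t1] v [i lt_i5 vi].
have -> : dist2_form (cex_diag 2) (cex_off t) v 5 = (v 0 + t * v 2) ^+ 2 +
    (v 4 + t * v 2) ^+ 2 + 2 * (1 - t ^+ 2) * v 2 ^+ 2 + v 1 ^+ 2 + v 3 ^+ 2.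
  by rewrite /= /cex_diag /cex_off /=; ring.
have c0 : 0 < 2 * (1 - t ^+ 2) by nra.
have vi2 : 0 < v i ^+ 2 by rewrite exprn_even_gt0 // vi orbT.
have [[[s0 s4] s1] s3] :=
  (sqr_ge0 (v 0 + t * v 2), sqr_ge0 (v 4 + t * v 2), sqr_ge0 (v 1), sqr_ge0 (v 3)).
have [v20|v2] := eqVneq (v 2) 0.
  rewrite v20 in s0 s4 *.
  by case: i lt_i5 vi vi2 => [|[|[|[|[|]]]]] //= _; rewrite ?v20 ?eqxx // => _; lra.
have : 0 < 2 * (1 - t ^+ 2) * v 2 ^+ 2.
  by apply: mulr_gt0 => //; rewrite exprn_even_gt0 // v2 orbT.
lra.
Qed.

Lemma cex_pd t p : 0 <= t < 1 -> (5 <= p)%N -> dist2_pd p (cex_diag 2) (cex_off t).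
Proof.
move=> t01; elim: p => [//|p IH] le5p.
have [le_p4|lt4p] := leqP p 4.
  by rewrite (_ : p.+1 = 5); [exact: cex_pd5 | lia].
apply: (dist2_pd_extend (c := 1) ltr01 (IH lt4p)) => v; rewrite dist2_formS.
have -> : cex_diag 2 p = 1 by rewrite /cex_diag (_ : (p == 2) = false) //; lia.
have -> : dist2_link (cex_off t) v p = 0.
  case: p {IH le5p} lt4p => [|[|k]] // lt4k.
  by rewrite /= /cex_off (_ : (k == 0) || (k == 2) = false) ?mul0r //; lia.
by rewrite mul0r mulr0 !addr0 !mul1r.
Qed.

Lemma cex_form_vec a b p : (5 <= p)%N ->
  dist2_form (cex_diag a) (cex_off b) cex_vec p = 2 + a - 4 * b.
Proof.
move=> le5p; rewrite (dist2_form_tail0 _ _ le5p) => [|i /andP [le5i _]].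
  by rewrite /= /cex_diag /cex_off /cex_vec /=; ring.
by case: i le5i => [|[|[|[|[|i]]]]].
Qed.

Lemma cex_diag_powR a r : (fun i => cex_diag a i `^ r) =1 cex_diag (a `^ r).
Proof. by move=> i; rewrite /cex_diag; case: ifP => // _; rewrite powR1. Qed.

Lemma cex_off_powR b r : r != 0 -> (fun i => cex_off b i `^ r) =1 cex_off (b `^ r).
Proof. by move=> r0 i; rewrite /cex_off; case: ifP => // _; rewrite powR0. Qed.

Lemma exists_dist2_posdef_hpow_not_psd n r : (5 <= n.+1)%N -> 0 < r -> r < 1 ->
  exists P : 'M[R]_n.+1, [/\ dist2_pattern P, posdef P & ~ possemidef (hpow r P)].
Proof.
move=> le5n r0 r1; have a2 : 2 `^ r < 2 by apply: ltr1_powR; rewrite ?ltr1n.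
pose t := ((2 + 2 `^ r) / 4 + 1) / 2.
have t0 : 0 < t by rewrite /t; have := powR_ge0 2 r; lra.
have t1 : t < 1 by rewrite /t; lra.
have tr : t <= t `^ r by apply: ger1_powR; rewrite ?t0 ?ltW.
have t_gt : 2 + 2 `^ r < 4 * t by rewrite /t; lra.
exists (dist2_mx n.+1 (cex_diag 2) (cex_off t)); split.
- apply: dist2_mx_pattern => i; rewrite /cex_diag /cex_off; case: ifP => _ //; lra.
- by apply/posdef_dist2_mxP; apply: cex_pd => //; rewrite ltW.
rewrite hpow_dist2_mx ?gt_eqF //.
rewrite (eq_dist2_mx _ (cex_diag_powR 2 r) (cex_off_powR t (lt0r_neq0 r0))).
move=> [_ /(_ (\row_(j < n.+1) cex_vec j))]; rewrite dist2_mx_form_row cex_form_vec //.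
lra.
Qed.

End Counterexample.

Theorem theorem1p3 (R : realType) (n : nat) (r : R) :
  (5 <= n)%N -> 0 < r ->
  ((forall P : 'M[R]_n, dist2_pattern P -> posdef P -> posdef (hpow r P))
     <-> 1 <= r) /\
  ((forall P : 'M[R]_n, dist2_pattern P -> possemidef P -> possemidef (hpow r P))
     <-> 1 <= r).
Proof.
case: n => [//|n] le5n r0.
have r_ge1 : (forall P : 'M[R]_n.+1, dist2_pattern P -> posdef P ->
    possemidef (hpow r P)) -> 1 <= r.
  move=> H; rewrite leNgt; apply/negP => r1.
  have [P [hP Ppd notpsd]] := exists_dist2_posdef_hpow_not_psd le5n r0 r1.
  exact/notpsd/H.
split; split=> [H | r1 P].
- by apply: r_ge1 => P hP /(H P hP)/posdef_possemidef.
- exact: posdef_hpow.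
- by apply: r_ge1 => P hP /posdef_possemidef/(H P hP).
- exact: possemidef_hpow.
Qed.
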